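(* Let $\mathcal{P}$ be a locally geometric poset. If $\mathcal{P}$ has an M-ideal $\mathcal{Q}$ with $\operatorname{rk}(\mathcal{Q})=\operatorname{rk}(\mathcal{P})-1$, then $\mathcal{P}$ is pure, i.e., all maximal elements of $\mathcal{P}$ have the same rank.
   Context: All posets are finite, have a unique minimal element $\hat0$ and are ranked; $\operatorname{rk}$ of a poset is the maximum rank of its elements. $A(\cdot)$ denotes the set of atoms (rank-1 elements). $\bigvee T$ is the set of minimal upper bounds of $T$, $x\vee y=\bigvee\{x,y\}$, and $x\wedge y$ is the meet. A lattice is geometric if $y$ covers $x$ iff there is an atom $a\not\le x$ with $y=x\vee a$; $\mathcal{P}$ is locally geometric if each $\mathcal{P}_{\le x}$ is a geometric lattice. An element $x$ of a geometric lattice $L$ is modular if $x\wedge(y\vee z)=(x\wedge y)\vee z$ for all $z\le x$, $y\in L$. An order ideal is a downward-closed subset; it is pure if all its maximal elements have the same rank and join-closed if $T\subseteq\mathcal{Q}$ implies $\bigvee T\subseteq\mathcal{Q}$. An M-ideal of $\mathcal{P}$ is a pure, join-closed order ideal $\mathcal{Q}$ such that (1) $|a\vee y|\ge1$ for all $y\in\mathcal{Q}$ and $a\in A(\mathcal{P})\setminus A(\mathcal{Q})$, and (2) for every maximal element $x$ of $\mathcal{P}$ there is a maximal element $y$ of $\mathcal{Q}$ that is modular in $\mathcal{P}_{\le x}$. *)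

From mathcomp Require Import all_boot all_order.
Set Implicit Arguments. Unset Strict Implicit. Unset Printing Implicit Defensive.
Import Order.POrderTheory.
Local Open Scope order_scope.

Section PosetDefs.
Context {d : Order.disp_t} {T : finPOrderType d}.

Definition covers (x y : T) : Prop :=
  x < y /\ forall z, ~ (x < z /\ z < y).

Definition has_bottom : Prop := exists b : T, forall y, b <= y.

Definition is_rank_fun (rk : T -> nat) : Prop :=
  (forall x, rk x = 0 <-> (forall y, x <= y)) /\
  (forall x y, covers x y -> rk y = (rk x).+1).

Definition atom (rk : T -> nat) (a : T) : Prop := rk a = 1.

Definition maximal (x : T) : Prop := forall y, ~ (x < y).

Definition maximal_in (Q : {set T}) (y : T) : Prop :=
  y \in Q /\ forall z, z \in Q -> ~ (y < z).

Definition rk_poset (rk : T -> nat) : nat := \max_(x : T) rk x.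
Definition rk_set (rk : T -> nat) (Q : {set T}) : nat := \max_(x in Q) rk x.

Definition pure (rk : T -> nat) : Prop :=
  forall x y, maximal x -> maximal y -> rk x = rk y.

(* bigvee S: u is a minimal upper bound of S in P *)
Definition upper_bound (S : {set T}) (u : T) : Prop := forall t, t \in S -> t <= u.
Definition min_upper_bound (S : {set T}) (u : T) : Prop :=
  upper_bound S u /\ forall v, upper_bound S v -> ~ (v < u).

Definition is_join_below (x a b j : T) : Prop :=
  [/\ j <= x, a <= j, b <= j &
      forall u, u <= x -> a <= u -> b <= u -> j <= u].
Definition is_meet (a b m : T) : Prop :=
  [/\ m <= a, m <= b & forall u, u <= a -> u <= b -> u <= m].

(* P_{<= x} is a lattice (finite with bottom: binary joins suffice;
   meets of elements below x are then meets in P) *)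
Definition lattice_below (x : T) : Prop :=
  (forall a b, a <= x -> b <= x -> exists j, is_join_below x a b j) /\
  (forall a b, a <= x -> b <= x -> exists m, is_meet a b m).

Definition geometric_below (rk : T -> nat) (x : T) : Prop :=
  lattice_below x /\
  forall y z, y <= x -> z <= x ->
    (covers y z <-> exists a, [/\ atom rk a, a <= x, ~~ (a <= y) &
                                  is_join_below x y a z]).

Definition locally_geometric (rk : T -> nat) : Prop :=
  forall x, geometric_below rk x.

(* y is a modular element of the geometric lattice P_{<= x}:
   y /\ (w \/ z) = (y /\ w) \/ z for all z <= y and w in P_{<= x}. *)
Definition modular_below (x y : T) : Prop :=
  y <= x /\
  forall z w, z <= y -> w <= x ->
    forall j m m' r, is_join_below x w z j -> is_meet y j m ->
      is_meet y w m' -> is_join_below x m' z r -> m = r.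

Definition order_ideal (Q : {set T}) : Prop :=
  forall x y, y \in Q -> x <= y -> x \in Q.

Definition pure_set (rk : T -> nat) (Q : {set T}) : Prop :=
  forall x y, maximal_in Q x -> maximal_in Q y -> rk x = rk y.

Definition join_closed (Q : {set T}) : Prop :=
  forall S : {set T}, S \subset Q -> forall u, min_upper_bound S u -> u \in Q.

Definition M_ideal (rk : T -> nat) (Q : {set T}) : Prop :=
  [/\ order_ideal Q, pure_set rk Q, join_closed Q,
      (forall y a, y \in Q -> atom rk a -> a \notin Q ->
         exists u, min_upper_bound [set a; y] u) &
      (forall x, maximal x ->
         exists y, maximal_in Q y /\ modular_below x y)].

End PosetDefs.

(* If a maximal element x of P lies strictly above the maximal element y of Q
   provided by the M-ideal axiom, then rk x > rk y = rk P - 1, so rk x = rk P.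
   Otherwise x itself lies in Q; by axiom (1), applied to x, every atom
   a ∉ Q would have a minimal upper bound with x, which must be x by
   maximality, forcing a ∈ Q. So Q contains every atom, and since each element
   of a geometric lattice is the minimal upper bound of the atoms below it,
   join-closedness gives Q = P; then rk P = rk P - 1, i.e. rk P = 0. *)
From mathcomp Require Import all_boot all_order.
From mathcomp Require Import zify.

Set Implicit Arguments.
Unset Strict Implicit.
Unset Printing Implicit Defensive.

Import Order.POrderTheory.
Local Open Scope order_scope.

Section RankedPoset.
Context {d : Order.disp_t} {T : finPOrderType d}.

Lemma card_strict_downset_lt (x y : T) :
  x < y -> (#|[set u | (u < x)%O]| < #|[set u | (u < y)%O]|)%N.
Proof.
move=> xy; apply: proper_card; apply/properP; split.
  by apply/subsetP => u; rewrite !inE => /lt_trans; apply.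
by exists x; rewrite !inE ?ltxx.
Qed.

Lemma lt_exists_cover (x z : T) : x < z -> exists w, covers x w /\ w <= z.
Proof.
move=> xz; pose P w := (x < w) && (w <= z).
have Pz : P z by rewrite /P xz lexx.
have [w /andP[xw wz] w_min] := arg_minnP (fun w => #|[set u : T | u < w]|) Pz.
exists w; split=> //; split=> // u [xu uw].
have Pu : P u by rewrite /P xu (le_trans (ltW uw) wz).
by have := w_min u Pu; rewrite leqNgt card_strict_downset_lt.
Qed.

Variable rk : T -> nat.
Hypothesis rk_rank : is_rank_fun rk.

Lemma rank_lt (x y : T) : x < y -> (rk x < rk y)%N.
Proof.
move: (leqnn (#|[set u | (u < y)%O]| - #|[set u | (u < x)%O]|)).
move: {2}(_ - _)%N => n; elim: n x => [|n IH] x le_n xy.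
  by have := card_strict_downset_lt xy; lia.
have [w [xw wy]] := lt_exists_cover xy.
have rk_w := rk_rank.2 _ _ xw.
case: (eqVneq w y) => [<- | neq_wy]; first by rewrite rk_w.
have wy' : w < y by rewrite lt_neqAle neq_wy wy.
have := card_strict_downset_lt xw.1.
by have := IH w _ wy'; lia.
Qed.

Lemma rk_le_rk_poset (x : T) : (rk x <= rk_poset rk)%N.
Proof. exact: leq_bigmax. Qed.

Lemma rk_le_rk_set (Q : {set T}) (x : T) : x \in Q -> (rk x <= rk_set rk Q)%N.
Proof. exact: leq_bigmax_cond. Qed.

Lemma rk_set_maximal_in (Q : {set T}) (y : T) :
  pure_set rk Q -> maximal_in Q y -> rk y = rk_set rk Q.
Proof.
move=> pureQ yQmax.
have Q_gt0 : (0 < #|Q|)%N by apply/card_gt0P; exists y; exact: yQmax.1.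
have [y0 y0Q rk_y0] := eq_bigmax_cond rk Q_gt0.
suff y0max : maximal_in Q y0 by rewrite /rk_set rk_y0 (pureQ _ _ yQmax y0max).
split=> // z zQ y0z.
by have := rank_lt y0z; have := rk_le_rk_set zQ; rewrite /rk_set rk_y0; lia.
Qed.

Lemma rk_poset_le_rk_set (Q : {set T}) :
  (forall z, z \in Q) -> (rk_poset rk <= rk_set rk Q)%N.
Proof. by move=> Q_full; apply/bigmax_leqP => z _; apply: rk_le_rk_set. Qed.

Lemma geometric_atoms_min_upper_bound (z : T) :
  geometric_below rk z -> min_upper_bound [set a | (rk a == 1) && (a <= z)] z.
Proof.
move=> [_ geom_z]; split=> [a | v ub_v vz].
  by rewrite inE => /andP[].
have [w [vw wz]] := lt_exists_cover vz.
have [a [/eqP a_atom az a_nv _]] := (geom_z v w (ltW vz) wz).1 vw.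
by move: a_nv; rewrite ub_v // inE a_atom az.
Qed.

Lemma geometric_mem_join_closed (Q : {set T}) (z : T) :
  join_closed Q -> geometric_below rk z ->
  (forall a, atom rk a -> a \in Q) -> z \in Q.
Proof.
move=> joinQ geom_z atomsQ; apply: joinQ (geometric_atoms_min_upper_bound geom_z).
by apply/subsetP => a; rewrite inE => /andP[/eqP a_atom _]; apply: atomsQ.
Qed.

Lemma atom_mem_ideal_of_maximal (Q : {set T}) (x a : T) :
  order_ideal Q ->
  (forall y a, y \in Q -> atom rk a -> a \notin Q ->
     exists u, min_upper_bound [set a; y] u) ->
  x \in Q -> maximal x -> atom rk a -> a \in Q.
Proof.
move=> idealQ joinsQ xQ xmax a_atom; apply/negPn/negP => aQ.
have [u [ub_u _]] := joinsQ x a xQ a_atom aQ.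
have xu : x <= u by apply: ub_u; rewrite !inE eqxx orbT.
have au : a <= u by apply: ub_u; rewrite !inE eqxx.
move: xu; rewrite le_eqVlt => /predU1P[exu | xu]; last by case: (xmax u).
by move: aQ; rewrite (idealQ a x xQ) // exu.
Qed.

End RankedPoset.

Theorem lemma4p1 (d : Order.disp_t) (T : finPOrderType d) (rk : T -> nat)
  (Q : {set T}) :
  has_bottom (T := T) -> is_rank_fun rk ->
  locally_geometric rk ->
  M_ideal rk Q -> rk_set rk Q = rk_poset rk - 1 ->
  pure rk.
Proof.
move=> _ rk_rank geomP [idealQ pureQ joinQ joinsQ modQ] rk_Q.
suff rk_max x : maximal x -> rk x = rk_poset rk by move=> x x' /rk_max -> /rk_max.
move=> xmax; have [y [yQmax [yx _]]] := modQ x xmax.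
have rk_y := rk_set_maximal_in rk_rank pureQ yQmax.
have := rk_le_rk_poset rk x.
move: yx; rewrite le_eqVlt => /predU1P[eyx | yx]; last first.
  by have := rank_lt rk_rank yx; lia.
have Q_full z : z \in Q.
  apply: geometric_mem_join_closed joinQ (geomP z) _ => a.
  by apply: atom_mem_ideal_of_maximal idealQ joinsQ _ xmax; rewrite -eyx yQmax.1.
by have := rk_poset_le_rk_set rk Q_full; rewrite -eyx; lia.
Qed.
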